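(* Let $\mathbf{C}$ and $\mathbf{D}$ be categories, and let $T\colon \mathbf{C}\to\mathbf{C}$ be a varietor that preserves reflexive coequalizers. Then for every monadic functor $G\colon \mathbf{C}\to\mathbf{D}$, the composite $\mathbf{Alg}(T)\xrightarrow{U}\mathbf{C}\xrightarrow{G}\mathbf{D}$ is monadic, where $U$ is the forgetful functor.
   Context: For an endofunctor $T\colon\mathbf{C}\to\mathbf{C}$, the category $\mathbf{Alg}(T)$ has as objects pairs $(X, a\colon TX\to X)$ and as morphisms $(X,a)\to(Y,b)$ the morphisms $h\colon X\to Y$ of $\mathbf{C}$ with $h\circ a = b\circ Th$; the forgetful functor $U\colon \mathbf{Alg}(T)\to\mathbf{C}$ sends $(X,a)$ to $X$ and $h$ to $h$. $T$ is called a varietor if $U$ has a left adjoint. A reflexive coequalizer is a coequalizer of a parallel pair $f,g\colon X\to Y$ having a common section $s\colon Y\to X$ (i.e. $f\circ s=g\circ s=1_Y$); $T$ preserves reflexive coequalizers if it sends such coequalizers to coequalizers. *)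

From Stdlib Require Import ProofIrrelevance.

Set Implicit Arguments.

Record Category := {
  Obj :> Type;
  Hom : Obj -> Obj -> Type;
  id : forall X, Hom X X;
  comp : forall X Y Z, Hom Y Z -> Hom X Y -> Hom X Z;
  comp_id_l : forall X Y (f : Hom X Y), comp (id Y) f = f;
  comp_id_r : forall X Y (f : Hom X Y), comp f (id X) = f;
  comp_assoc : forall X Y Z W (h : Hom Z W) (g : Hom Y Z) (f : Hom X Y),
      comp h (comp g f) = comp (comp h g) f
}.
Arguments Hom {c} X Y.
Arguments id {c} X.
Arguments comp {c X Y Z} g f.

Record Functor (C D : Category) := {
  fobj :> C -> D;
  fmap : forall X Y : C, Hom X Y -> Hom (fobj X) (fobj Y);
  fmap_id : forall X : C, fmap X X (id X) = id (fobj X);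
  fmap_comp : forall (X Y Z : C) (g : Hom Y Z) (f : Hom X Y),
      fmap X Z (comp g f) = comp (fmap Y Z g) (fmap X Y f)
}.
Arguments fmap {C D} f {X Y} h : rename.

Definition IdF (C : Category) : Functor C C.
Proof.
  refine {| fobj := fun X => X; fmap := fun X Y f => f |}; reflexivity.
Defined.

Definition FComp (A B C : Category) (G : Functor B C) (F : Functor A B)
  : Functor A C.
Proof.
  refine {| fobj := fun X => G (F X); fmap := fun X Y f => fmap G (fmap F f) |}.
  - intros X. rewrite !fmap_id. reflexivity.
  - intros X Y Z g f. rewrite !fmap_comp. reflexivity.
Defined.

Record NatIso (C D : Category) (F G : Functor C D) := {
  ni_fwd : forall X, Hom (F X) (G X);
  ni_bwd : forall X, Hom (G X) (F X);
  ni_nat : forall X Y (f : Hom X Y),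
      comp (ni_fwd Y) (fmap F f) = comp (fmap G f) (ni_fwd X);
  ni_fb : forall X, comp (ni_fwd X) (ni_bwd X) = id (G X);
  ni_bf : forall X, comp (ni_bwd X) (ni_fwd X) = id (F X)
}.

Record Equivalence (C D : Category) (K : Functor C D) := {
  eq_inv : Functor D C;
  eq_iso1 : NatIso (FComp eq_inv K) (IdF C);
  eq_iso2 : NatIso (FComp K eq_inv) (IdF D)
}.

Record Adjunction (C D : Category) (F : Functor D C) (G : Functor C D) := {
  adj_unit : forall d : D, Hom d (G (F d));
  adj_counit : forall c : C, Hom (F (G c)) c;
  adj_unit_nat : forall d d' (f : Hom d d'),
      comp (adj_unit d') f = comp (fmap G (fmap F f)) (adj_unit d);
  adj_counit_nat : forall c c' (f : Hom c c'),
      comp (adj_counit c') (fmap F (fmap G f)) = comp f (adj_counit c);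
  adj_tri1 : forall d, comp (adj_counit (F d)) (fmap F (adj_unit d)) = id (F d);
  adj_tri2 : forall c, comp (fmap G (adj_counit c)) (adj_unit (G c)) = id (G c)
}.

Lemma sig_eq_proj (A : Type) (P : A -> Prop) (x y : {a : A | P a}) :
  proj1_sig x = proj1_sig y -> x = y.
Proof.
  destruct x as [a p], y as [b q]; simpl; intros ->.
  f_equal; apply proof_irrelevance.
Qed.

Section AlgCat.
Variable C : Category.
Variable T : Functor C C.

Definition AlgObj := { X : C & Hom (T X) X }.
Definition AlgHom (A B : AlgObj) :=
  { h : Hom (projT1 A) (projT1 B) | comp h (projT2 A) = comp (projT2 B) (fmap T h) }.

Definition alg_id (A : AlgObj) : AlgHom A A.
Proof.
  exists (id _). rewrite fmap_id, comp_id_l, comp_id_r. reflexivity.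
Defined.

Definition alg_comp (A B D : AlgObj) (g : AlgHom B D) (f : AlgHom A B) : AlgHom A D.
Proof.
  exists (comp (proj1_sig g) (proj1_sig f)).
  destruct g as [g pg], f as [f pf]; simpl.
  rewrite <- comp_assoc, pf, comp_assoc, pg, <- comp_assoc, <- fmap_comp.
  reflexivity.
Defined.

Definition Alg : Category.
Proof.
  refine {| Obj := AlgObj; Hom := AlgHom; id := alg_id; comp := alg_comp |}.
  - intros; apply sig_eq_proj; simpl; apply comp_id_l.
  - intros; apply sig_eq_proj; simpl; apply comp_id_r.
  - intros; apply sig_eq_proj; simpl; apply comp_assoc.
Defined.

Definition AlgForget : Functor Alg C.
Proof.
  refine {| fobj := fun A : Alg => projT1 A; fmap := fun A B h => proj1_sig h |};
  reflexivity.
Defined.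
End AlgCat.

Definition FullSub (C : Category) (P : C -> Prop) : Category.
Proof.
  refine {| Obj := {x : C | P x};
            Hom := fun x y => Hom (proj1_sig x) (proj1_sig y);
            id := fun x => id (proj1_sig x);
            comp := fun x y z g f => comp g f |}.
  - intros; apply comp_id_l.
  - intros; apply comp_id_r.
  - intros; apply comp_assoc.
Defined.

(* Eilenberg--Moore category of the monad G F induced by an adjunction F -| G:
   the algebras (X, a : G F X -> X) with a o eta_X = 1 and
   a o mu_X = a o (G F a), where mu_X = G (eps_{F X}). *)
Section EM.
Variables (C D : Category) (F : Functor D C) (G : Functor C D).
Variable adj : Adjunction F G.

Definition EM_law (A : Alg (FComp G F)) : Prop :=
  comp (projT2 A) (adj_unit adj (projT1 A)) = id (projT1 A) /\
  comp (projT2 A) (fmap G (adj_counit adj (F (projT1 A))))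
    = comp (projT2 A) (fmap G (fmap F (projT2 A))).

Definition EM : Category := @FullSub (Alg (FComp G F)) EM_law.

Definition comparison_obj (c : C) : EM.
Proof.
  exists (existT (fun X => Hom (G (F X)) X) (G c) (fmap G (adj_counit adj c))).
  split; simpl.
  - apply adj_tri2.
  - rewrite <- !fmap_comp. f_equal. symmetry. apply adj_counit_nat.
Defined.

Definition Comparison : Functor C EM.
Proof.
  refine {| fobj := comparison_obj;
            fmap := fun c c' f =>
              exist _ (fmap G f) _ : Hom (comparison_obj c) (comparison_obj c') |}.
  - intros X; apply sig_eq_proj; simpl; apply fmap_id.
  - intros; apply sig_eq_proj; simpl; apply fmap_comp.
  Unshelve.
  simpl. rewrite <- !fmap_comp. f_equal. symmetry. apply adj_counit_nat.
Defined.
End EM.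

Definition Monadic (C D : Category) (G : Functor C D) : Prop :=
  exists (F : Functor D C) (adj : Adjunction F G), inhabited (Equivalence (Comparison adj)).

Definition Varietor (C : Category) (T : Functor C C) : Prop :=
  exists F : Functor C (Alg T), inhabited (Adjunction F (AlgForget T)).

Definition IsCoequalizer (C : Category) (X Y Q : C) (f g : Hom X Y) (q : Hom Y Q) : Prop :=
  comp q f = comp q g /\
  forall (Z : C) (h : Hom Y Z), comp h f = comp h g ->
    exists! k : Hom Q Z, comp k q = h.

Definition PreservesReflexiveCoequalizers (C D : Category) (T : Functor C D) : Prop :=
  forall (X Y Q : C) (f g : Hom X Y) (s : Hom Y X) (q : Hom Y Q),
    comp f s = id Y -> comp g s = id Y ->
    @IsCoequalizer C X Y Q f g q ->
    @IsCoequalizer D (T X) (T Y) (T Q) (fmap T f) (fmap T g) (fmap T q).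

(* Write F ⊣ G for the monadic adjunction and P ⊣ U for the free T-algebra
   adjunction.  Composing them gives P F ⊣ G U, and we show that the comparison
   functor K : Alg(T) -> EM(G U P F) is fully faithful and essentially surjective,
   which suffices for it to be an equivalence (with choice).

   Since T preserves reflexive coequalizers, T ε_c is
   a coequalizer, hence an epimorphism; this is the only use of the hypothesis
   on T.  Fullness of K follows because an EM-morphism between T-algebras
   comes from a C-morphism whose compatibility with the structure maps can be
   tested after precomposing with the epimorphism T ε.  For essential
   surjectivity, an EM(G U P F)-algebra (X, x) restricts to a G F-algebra,
   hence is isomorphic to some G c; transporting x gives r : U P F G c -> c,
   and the T-algebra structure t on c is obtained by factoring
   r ∘ (free structure) ∘ T η^P through the coequalizer T ε_c.  Then r is the
   counit of P F ⊣ G U at (c, t), which makes the isomorphism an EM-map. *)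
From Stdlib Require Import ClassicalEpsilon.

Lemma whisker_r {C : Category} {X Y Y' Z W : C} {a : Hom Y Z} {b : Hom X Y}
  {c : Hom Y' Z} {d : Hom X Y'} (H : comp a b = comp c d) (r : Hom W X) :
  comp a (comp b r) = comp c (comp d r).
Proof. rewrite !comp_assoc, H. reflexivity. Qed.

Lemma whisker_r_comp {C : Category} {X Y Z W : C} {a : Hom Y Z} {b : Hom X Y}
  {c : Hom X Z} (H : comp a b = c) (r : Hom W X) : comp a (comp b r) = comp c r.
Proof. rewrite comp_assoc, H. reflexivity. Qed.

Lemma whisker_r_id {C : Category} {X Y W : C} {a : Hom Y X} {b : Hom X Y}
  (H : comp a b = id X) (r : Hom W X) : comp a (comp b r) = r.
Proof. rewrite comp_assoc, H, comp_id_l. reflexivity. Qed.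

Lemma fmap_square {C D : Category} (K : Functor C D) {X Y Y' Z : C}
  {a : Hom Y Z} {b : Hom X Y} {c : Hom Y' Z} {d : Hom X Y'} :
  comp a b = comp c d -> comp (fmap K a) (fmap K b) = comp (fmap K c) (fmap K d).
Proof. intros H. rewrite <- !fmap_comp, H. reflexivity. Qed.

Lemma fmap_triangle {C D : Category} (K : Functor C D) {X Y Z : C}
  {a : Hom Y Z} {b : Hom X Y} {c : Hom X Z} :
  comp a b = c -> comp (fmap K a) (fmap K b) = fmap K c.
Proof. intros H. rewrite <- fmap_comp, H. reflexivity. Qed.

Lemma fmap_retraction {C D : Category} (K : Functor C D) {X Y : C}
  {a : Hom Y X} {b : Hom X Y} :
  comp a b = id X -> comp (fmap K a) (fmap K b) = id (K X).
Proof. intros H. rewrite <- fmap_comp, H, fmap_id. reflexivity. Qed.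

Lemma split_mono_cancel {C : Category} {X Y Z : C} (v : Hom Y X) (u : Hom X Y)
  (a b : Hom Z X) : comp v u = id X -> comp u a = comp u b -> a = b.
Proof.
  intros H E. rewrite <- (comp_id_l _ _ _ a), <- (comp_id_l _ _ _ b), <- H,
    <- !comp_assoc, E. reflexivity.
Qed.

Lemma coequalizer_epi {C : Category} {X Y Q : C} {f g : Hom X Y} {q : Hom Y Q} :
  @IsCoequalizer C X Y Q f g q -> forall Z (h1 h2 : Hom Q Z), comp h1 q = comp h2 q -> h1 = h2.
Proof.
  intros [Hq Hu] Z h1 h2 H.
  destruct (Hu Z (comp h1 q)) as [k [_ Hk]].
  { rewrite <- !comp_assoc, Hq. reflexivity. }
  rewrite <- (Hk h1 eq_refl), <- (Hk h2 (eq_sym H)). reflexivity.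
Qed.

Ltac normalize_comp :=
  repeat (rewrite ?fmap_comp, ?fmap_id, ?comp_id_l, ?comp_id_r, <- ?comp_assoc; simpl).

Lemma fully_faithful_ess_surj_equivalence (A B : Category) (K : Functor A B) :
  (forall X Y (f g : Hom X Y), fmap K f = fmap K g -> f = g) ->
  (forall X Y (m : Hom (K X) (K Y)), exists f, fmap K f = m) ->
  (forall b : B, exists (a : A) (i : Hom (K a) b) (j : Hom b (K a)),
       comp i j = id b /\ comp j i = id (K a)) ->
  inhabited (Equivalence K).
Proof.
  intros faith full ess.
  assert (pre : forall X Y (m : Hom (K X) (K Y)), {f : Hom X Y | fmap K f = m}).
  { intros X Y m. apply constructive_indefinite_description. apply full. }
  assert (ch : forall b : B, {a : A & {i : Hom (K a) b & {j : Hom b (K a) |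
       comp i j = id b /\ comp j i = id (K a)}}}).
  { intros b. destruct (constructive_indefinite_description _ (ess b)) as [a Ha].
    destruct (constructive_indefinite_description _ Ha) as [i Hi].
    destruct (constructive_indefinite_description _ Hi) as [j Hj].
    exists a, i, j. exact Hj. }
  pose (ob := fun b => projT1 (ch b)).
  pose (ii := fun b => projT1 (projT2 (ch b)) : Hom (K (ob b)) b).
  pose (jj := fun b => proj1_sig (projT2 (projT2 (ch b))) : Hom b (K (ob b))).
  assert (ij : forall b, comp (ii b) (jj b) = id b)
    by (intro b; exact (proj1 (proj2_sig (projT2 (projT2 (ch b)))))).
  assert (ji : forall b, comp (jj b) (ii b) = id _)
    by (intro b; exact (proj2 (proj2_sig (projT2 (projT2 (ch b)))))).
  clearbody ob ii jj.
  pose (pf := fun X Y m => proj1_sig (pre X Y m)).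
  assert (pfs : forall X Y m, fmap K (pf X Y m) = m)
    by (intros; exact (proj2_sig (pre X Y m))).
  clearbody pf. clear pre ch.
  unshelve refine (let L : Functor B A :=
    {| fobj := ob; fmap := fun b b' m => pf _ _ (comp (jj b') (comp m (ii b))) |} in _).
  - intros b. apply faith. rewrite pfs, fmap_id, comp_id_l. apply ji.
  - intros X Y Z g f. apply faith. rewrite fmap_comp, !pfs, <- !comp_assoc.
    rewrite (whisker_r_id (ij Y)). reflexivity.
  - constructor. refine {| eq_inv := L |}.
    + unshelve refine {| ni_fwd := fun X : A => pf (ob (K X)) X (ii (K X))
                                               : Hom (FComp L K X) (IdF A X);
                         ni_bwd := fun X : A => pf X (ob (K X)) (jj (K X))
                                               : Hom (IdF A X) (FComp L K X) |}.
      * intros X Y f. apply faith. simpl. rewrite !fmap_comp, !pfs.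
        rewrite !comp_assoc, ij, comp_id_l. reflexivity.
      * intros X. apply faith. simpl. rewrite fmap_comp, !pfs, ij, fmap_id. reflexivity.
      * intros X. apply faith. simpl. rewrite fmap_comp, !pfs, ji, fmap_id. reflexivity.
    + unshelve refine {| ni_fwd := fun b : B => ii b : Hom (FComp K L b) (IdF B b);
                         ni_bwd := fun b : B => jj b : Hom (IdF B b) (FComp K L b) |}.
      * intros X Y f. simpl. rewrite pfs, !comp_assoc, ij, comp_id_l. reflexivity.
      * intros. apply ij.
      * intros. apply ji.
Qed.

Lemma natiso_faithful (A B : Category) (K : Functor A B) (L : Functor B A)
  (n : NatIso (FComp L K) (IdF A)) :
  forall X Y (f g : Hom X Y), fmap K f = fmap K g -> f = g.
Proof.
  intros X Y f g H.
  assert (E : forall h : Hom X Y,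
             h = comp (ni_fwd n Y) (comp (fmap L (fmap K h)) (ni_bwd n X))).
  { intros h. pose proof (ni_nat n X Y h) as N. pose proof (ni_fb n X) as Fb.
    simpl in N, Fb. simpl. rewrite comp_assoc, N, <- comp_assoc, Fb, comp_id_r.
    reflexivity. }
  rewrite (E f), (E g), H. reflexivity.
Qed.

Lemma equivalence_faithful {A B : Category} {K : Functor A B} (e : Equivalence K) :
  forall X Y (f g : Hom X Y), fmap K f = fmap K g -> f = g.
Proof. exact (@natiso_faithful A B K _ (eq_iso1 e)). Qed.

(* An equivalence is full: a preimage of m is L m conjugated by L K ≅ 1. *)
Lemma equivalence_full {A B : Category} {K : Functor A B} (e : Equivalence K) :
  forall X Y (m : Hom (K X) (K Y)), exists f, fmap K f = m.
Proof.
  intros X Y m. pose (n := eq_iso1 e).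
  exists (comp (ni_fwd n Y) (comp (fmap (eq_inv e) m) (ni_bwd n X))).
  apply (@natiso_faithful B A (eq_inv e) K (eq_iso2 e)).
  pose proof (ni_bf n Y) as BfY. pose proof (ni_bf n X) as BfX. simpl in BfX, BfY.
  apply (split_mono_cancel (ni_bwd n Y) (ni_fwd n Y)); [exact BfY|].
  pose proof (ni_nat n _ _ (comp (ni_fwd n Y) (comp (fmap (eq_inv e) m) (ni_bwd n X))))
    as N. simpl in N. simpl.
  rewrite N, <- !comp_assoc, BfX, comp_id_r. reflexivity.
Qed.

Definition adjunction_compose {C D E : Category} {F1 : Functor D C} {G1 : Functor C D}
  (a1 : Adjunction F1 G1) {F2 : Functor C E} {G2 : Functor E C}
  (a2 : Adjunction F2 G2) : Adjunction (FComp F2 F1) (FComp G1 G2).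
Proof.
  unshelve refine
    {| adj_unit := fun d : D => comp (fmap G1 (adj_unit a2 (F1 d))) (adj_unit a1 d)
                                 : Hom d (FComp G1 G2 (FComp F2 F1 d));
       adj_counit := fun e : E => comp (adj_counit a2 e) (fmap F2 (adj_counit a1 (G2 e)))
                                 : Hom (FComp F2 F1 (FComp G1 G2 e)) e |}.
  - intros d d' f. simpl. normalize_comp. rewrite (adj_unit_nat a1). normalize_comp.
    rewrite (whisker_r (fmap_square G1 (adj_unit_nat a2 _ _ (fmap F1 f)))). reflexivity.
  - intros c c' f. simpl. normalize_comp.
    rewrite (fmap_square F2 (adj_counit_nat a1 _ _ (fmap G2 f))).
    rewrite (whisker_r (adj_counit_nat a2 _ _ f)). reflexivity.
  - intros d. simpl. normalize_comp.
    rewrite (whisker_r (fmap_square F2 (adj_counit_nat a1 _ _ (adj_unit a2 (F1 d))))).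
    rewrite (whisker_r_id (adj_tri1 a2 (F1 d))). apply (fmap_retraction F2 (adj_tri1 a1 d)).
  - intros e. simpl. normalize_comp.
    rewrite <- (whisker_r (fmap_square G1 (adj_unit_nat a2 _ _ (adj_counit a1 (G2 e))))).
    rewrite (whisker_r_id (fmap_retraction G1 (adj_tri2 a2 e))). apply (adj_tri2 a1 (G2 e)).
Defined.

Lemma adjunction_compose_counit {C D E : Category} {F1 : Functor D C} {G1 : Functor C D}
  (a1 : Adjunction F1 G1) {F2 : Functor C E} {G2 : Functor E C}
  (a2 : Adjunction F2 G2) (x : E) :
  comp (fmap G2 (adj_counit (adjunction_compose a1 a2) x)) (adj_unit a2 (F1 (G1 (G2 x))))
  = adj_counit a1 (G2 x).
Proof.
  simpl. normalize_comp. rewrite <- (adj_unit_nat a2).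
  rewrite (whisker_r_id (adj_tri2 a2 x)). reflexivity.
Qed.

Lemma adjunction_transpose_unique {C D : Category} {F : Functor D C} {G : Functor C D}
  (adj : Adjunction F G) (d : D) (B : C) (g1 g2 : Hom (F d) B) :
  comp (fmap G g1) (adj_unit adj d) = comp (fmap G g2) (adj_unit adj d) -> g1 = g2.
Proof.
  intros H.
  assert (E : forall g : Hom (F d) B,
             g = comp (adj_counit adj B) (fmap F (comp (fmap G g) (adj_unit adj d)))).
  { intros g. rewrite fmap_comp, comp_assoc, (adj_counit_nat adj), <- comp_assoc,
      (adj_tri1 adj), comp_id_r. reflexivity. }
  rewrite (E g1), (E g2), H. reflexivity.
Qed.

Section MonadicAdjunction.
Context {C D : Category} {F : Functor D C} {G : Functor C D}.
Context {adj : Adjunction F G} (e : Equivalence (Comparison adj)).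

Local Notation eta := (adj_unit adj).
Local Notation eps := (adj_counit adj).

Lemma monadic_faithful : forall X Y (f g : Hom X Y), fmap G f = fmap G g -> f = g.
Proof.
  intros X Y f g H. apply (equivalence_faithful e). apply sig_eq_proj. exact H.
Qed.

Lemma monadic_full : forall c c' (m : Hom (G c) (G c')),
  comp m (fmap G (eps c)) = comp (fmap G (eps c')) (fmap G (fmap F m)) ->
  exists f, fmap G f = m.
Proof.
  intros c c' m Hm.
  destruct (equivalence_full e c c' (exist _ m Hm)) as [f Hf].
  exists f. exact (f_equal (@proj1_sig _ _) Hf).
Qed.

Lemma monadic_ess_surj : forall (X : D) (a : Hom (G (F X)) X),
  comp a (eta X) = id X ->
  comp a (fmap G (eps (F X))) = comp a (fmap G (fmap F a)) ->
  exists (c : C) (phi : Hom (G c) X) (psi : Hom X (G c)),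
    comp phi psi = id X /\ comp psi phi = id (G c) /\
    comp phi (fmap G (eps c)) = comp a (fmap G (fmap F phi)).
Proof.
  intros X a H1 H2.
  pose (A := exist (EM_law adj) (existT (fun X => Hom (G (F X)) X) X a) (conj H1 H2)
             : EM adj).
  exists (eq_inv e A), (proj1_sig (ni_fwd (eq_iso2 e) A)),
    (proj1_sig (ni_bwd (eq_iso2 e) A)).
  split; [|split].
  - exact (f_equal (@proj1_sig _ _) (ni_fb (eq_iso2 e) A)).
  - exact (f_equal (@proj1_sig _ _) (ni_bf (eq_iso2 e) A)).
  - exact (proj2_sig (ni_fwd (eq_iso2 e) A)).
Qed.

(* The counit ε_c is a coequalizer of ε_{FGc} and F G ε_c; the pair is
   reflexive with common section F η_{Gc}. *)
Lemma counit_coequalizer (c : C) :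
  @IsCoequalizer C _ _ _ (eps (F (G c))) (fmap F (fmap G (eps c))) (eps c).
Proof.
  split; [symmetry; apply (adj_counit_nat adj)|].
  intros Z h Hh.
  pose (m := comp (fmap G h) (eta (G c))).
  assert (Hm : comp m (fmap G (eps c)) = fmap G h).
  { unfold m. rewrite <- comp_assoc, (adj_unit_nat adj). normalize_comp.
    rewrite <- (whisker_r (fmap_square G Hh)), (adj_tri2 adj), comp_id_r.
    reflexivity. }
  assert (Hm_alg : comp m (fmap G (eps c)) = comp (fmap G (eps Z)) (fmap G (fmap F m))).
  { rewrite Hm. unfold m. normalize_comp.
    rewrite (whisker_r (fmap_square G (adj_counit_nat adj _ _ h))).
    rewrite (fmap_retraction G (adj_tri1 adj (G c))), comp_id_r. reflexivity. }
  destruct (monadic_full _ _ _ Hm_alg) as [k Hk].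
  exists k. split.
  - apply monadic_faithful. rewrite fmap_comp, Hk. exact Hm.
  - intros k' Hk'. apply monadic_faithful.
    rewrite Hk. unfold m. rewrite <- Hk', fmap_comp, <- comp_assoc, (adj_tri2 adj c),
      comp_id_r. reflexivity.
Qed.
End MonadicAdjunction.

Lemma algebra_map_along_epi {C : Category} (T : Functor C C)
  {a0 b0 X Y : C} (a : Hom (T a0) a0) (b : Hom (T b0) b0)
  (sX : Hom (T X) X) (sY : Hom (T Y) Y)
  (eA : Hom X a0) (eB : Hom Y b0) (g : Hom X Y) (f0 : Hom a0 b0) :
  comp eA sX = comp a (fmap T eA) -> comp eB sY = comp b (fmap T eB) ->
  comp g sX = comp sY (fmap T g) -> comp f0 eA = comp eB g ->
  (forall Z (h1 h2 : Hom (T a0) Z), comp h1 (fmap T eA) = comp h2 (fmap T eA) -> h1 = h2) ->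
  comp f0 a = comp b (fmap T f0).
Proof.
  intros HeA HeB Hg Hf epi. apply epi. rewrite <- !comp_assoc.
  rewrite <- HeA, comp_assoc, Hf, <- comp_assoc, Hg, comp_assoc, HeB,
    <- comp_assoc, (fmap_square T Hf). reflexivity.
Qed.

Section LiftingAlgebras.
Context {C D : Category} {T : Functor C C} {G : Functor C D} {F : Functor D C}
  {P : Functor C (Alg T)}.
Variables (eta : forall d : D, Hom d (G (F d))) (eps : forall c : C, Hom (F (G c)) c).
Variable etaP : forall c : C, Hom c (projT1 (P c)).
Variable epsPF : forall A : Alg T, Hom (P (F (G (projT1 A)))) A.

Local Notation UP f := (proj1_sig (fmap P f)).
Local Notation epsU A := (proj1_sig (epsPF A)).

Hypothesis eps_nat : forall c c' (f : Hom c c'),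
  comp (eps c') (fmap F (fmap G f)) = comp f (eps c).
Hypothesis etaP_nat : forall c c' (f : Hom c c'), comp (etaP c') f = comp (UP f) (etaP c).
Hypothesis epsPF_etaP : forall A : Alg T,
  comp (epsU A) (etaP (F (G (projT1 A)))) = eps (projT1 A).
Hypothesis epsPF_nat : forall (A B : Alg T) (h : Hom A B),
  comp (epsU B) (UP (fmap F (fmap G (proj1_sig h)))) = comp (proj1_sig h) (epsU A).
Hypothesis free_unique : forall c (A : Alg T) (g1 g2 : Hom (P c) A),
  comp (proj1_sig g1) (etaP c) = comp (proj1_sig g2) (etaP c) -> g1 = g2.
Hypothesis G_faithful : forall c c' (f g : Hom c c'), fmap G f = fmap G g -> f = g.
Hypothesis G_full : forall c c' (m : Hom (G c) (G c')),
  comp m (fmap G (eps c)) = comp (fmap G (eps c')) (fmap G (fmap F m)) ->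
  exists f, fmap G f = m.
Hypothesis G_ess_surj : forall (X : D) (a : Hom (G (F X)) X),
  comp a (eta X) = id X ->
  comp a (fmap G (eps (F X))) = comp a (fmap G (fmap F a)) ->
  exists (c : C) (phi : Hom (G c) X) (psi : Hom X (G c)),
    comp phi psi = id X /\ comp psi phi = id (G c) /\
    comp phi (fmap G (eps c)) = comp a (fmap G (fmap F phi)).
Hypothesis T_eps_coequalizer : forall c,
  @IsCoequalizer C _ _ _ (fmap T (eps (F (G c)))) (fmap T (fmap F (fmap G (eps c))))
    (fmap T (eps c)).

Lemma UP_square {X Y Y' Z : C} {a : Hom Y Z} {b : Hom X Y} {c : Hom Y' Z} {d : Hom X Y'} :
  comp a b = comp c d -> comp (UP a) (UP b) = comp (UP c) (UP d).
Proof. intros H. exact (f_equal (@proj1_sig _ _) (fmap_square P H)). Qed.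

Lemma UP_retraction {X Y : C} {a : Hom Y X} {b : Hom X Y} :
  comp a b = id X -> comp (UP a) (UP b) = id (projT1 (P X)).
Proof. intros H. exact (f_equal (@proj1_sig _ _) (fmap_retraction P H)). Qed.

Lemma epsPF_free_unit (X : D) :
  comp (epsU (P (F X))) (UP (fmap F (fmap G (etaP (F X))))) = UP (eps (F X)).
Proof.
  assert (H : @comp (Alg T) _ _ _ (epsPF (P (F X))) (fmap P (fmap F (fmap G (etaP (F X)))))
              = fmap P (eps (F X))).
  { apply free_unique. simpl.
    rewrite <- comp_assoc, <- (etaP_nat _ _ (fmap F (fmap G (etaP (F X))))), comp_assoc,
      epsPF_etaP, eps_nat, <- (etaP_nat _ _ (eps (F X))). reflexivity. }
  exact (f_equal (@proj1_sig _ _) H).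
Qed.

Section EMAlgebra.
Variables (X : D) (x : Hom (G (projT1 (P (F X)))) X).
Hypothesis x_unit : comp x (comp (fmap G (etaP (F X))) (eta X)) = id X.
Hypothesis x_assoc :
  comp x (fmap G (epsU (P (F X)))) = comp x (fmap G (UP (fmap F x))).

(* Its restriction along G η^P is a G F-algebra structure a0 on X. *)
Let a0 : Hom (G (F X)) X := comp x (fmap G (etaP (F X))).

Lemma x_counit : comp x (fmap G (eps (projT1 (P (F X))))) = comp a0 (fmap G (fmap F x)).
Proof.
  unfold a0. rewrite <- comp_assoc, <- fmap_comp, etaP_nat, fmap_comp, comp_assoc, <- x_assoc,
    <- comp_assoc, <- fmap_comp, epsPF_etaP. reflexivity.
Qed.

Lemma a0_unit : comp a0 (eta X) = id X.
Proof. unfold a0. rewrite <- comp_assoc. exact x_unit. Qed.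

Lemma a0_assoc : comp a0 (fmap G (eps (F X))) = comp a0 (fmap G (fmap F a0)).
Proof.
  symmetry. unfold a0 at 2. normalize_comp.
  rewrite (whisker_r_comp (eq_sym x_counit)), <- comp_assoc, <- fmap_comp, eps_nat,
    fmap_comp, comp_assoc. reflexivity.
Qed.

Lemma x_free_counit :
  comp x (fmap G (UP (fmap F a0))) = comp x (fmap G (UP (eps (F X)))).
Proof.
  unfold a0. normalize_comp. rewrite <- (whisker_r x_assoc).
  rewrite (fmap_triangle G (epsPF_free_unit X)). reflexivity.
Qed.

(* By monadicity of G, the G F-algebra (X, a0) is isomorphic to (G c, G ε_c). *)
Section Isomorphic.
Variables (c : C) (phi : Hom (G c) X) (psi : Hom X (G c)).
Hypothesis phi_psi : comp phi psi = id X.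
Hypothesis psi_phi : comp psi phi = id (G c).
Hypothesis phi_GF_map : comp phi (fmap G (eps c)) = comp a0 (fmap G (fmap F phi)).

Lemma G_eps_c : fmap G (eps c) = comp psi (comp a0 (fmap G (fmap F phi))).
Proof. rewrite <- phi_GF_map, comp_assoc, psi_phi, comp_id_l. reflexivity. Qed.

(* Transporting x along the isomorphism gives a map U P F G c -> c that is a
   G F-algebra map, hence the image under G of an arrow r. *)
Let xc : Hom (G (projT1 (P (F (G c))))) (G c) :=
  comp psi (comp x (fmap G (UP (fmap F phi)))).

Lemma xc_GF_map :
  comp xc (fmap G (eps (projT1 (P (F (G c)))))) = comp (fmap G (eps c)) (fmap G (fmap F xc)).
Proof.
  rewrite G_eps_c. unfold xc. normalize_comp.
  rewrite (whisker_r_id (fmap_retraction G (fmap_retraction F phi_psi))).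
  rewrite <- (whisker_r x_counit).
  rewrite (fmap_square G (eps_nat _ _ (UP (fmap F phi)))). reflexivity.
Qed.

Section Lift.
Variable r : Hom (projT1 (P (F (G c)))) c.
Hypothesis G_r : fmap G r = xc.

Lemma r_coequalizes :
  comp r (UP (eps (F (G c)))) = comp r (UP (fmap F (fmap G (eps c)))).
Proof.
  apply G_faithful. rewrite !fmap_comp, G_r. unfold xc. normalize_comp.
  rewrite (fmap_square G (UP_square (eq_sym (eps_nat _ _ (fmap F phi))))).
  rewrite (fmap_square G (UP_square (fmap_square F phi_GF_map))).
  rewrite (whisker_r x_free_counit). reflexivity.
Qed.

(* The would-be structure map on c, defined on the generators T F G c. *)
Let rho : Hom (T (F (G c))) c :=
  comp r (comp (projT2 (P (F (G c)))) (fmap T (etaP (F (G c))))).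

Lemma rho_coequalizes :
  comp rho (fmap T (eps (F (G c)))) = comp rho (fmap T (fmap F (fmap G (eps c)))).
Proof.
  unfold rho. rewrite <- !comp_assoc.
  rewrite (fmap_square T (etaP_nat _ _ (eps (F (G c))))),
    (fmap_square T (etaP_nat _ _ (fmap F (fmap G (eps c))))).
  rewrite <- (whisker_r (proj2_sig (fmap P (eps (F (G c)))))).
  rewrite <- (whisker_r (proj2_sig (fmap P (fmap F (fmap G (eps c)))))).
  rewrite (whisker_r r_coequalizes). reflexivity.
Qed.

(* Hence rho factors through the coequalizer T ε_c as t ∘ T ε_c. *)
Variable t : Hom (T c) c.
Hypothesis t_rho : comp t (fmap T (eps c)) = rho.

Lemma r_assoc :
  comp r (UP (fmap F (fmap G r))) = comp r (epsU (P (F (G c)))).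
Proof.
  apply G_faithful. rewrite !fmap_comp, G_r. unfold xc. normalize_comp.
  rewrite (whisker_r_id (fmap_retraction G (UP_retraction (fmap_retraction F phi_psi)))).
  rewrite <- (whisker_r x_assoc).
  rewrite (fmap_square G (epsPF_nat _ _ (fmap P (fmap F phi)))). reflexivity.
Qed.

Lemma r_algebra_map : comp r (projT2 (P (F (G c)))) = comp t (fmap T r).
Proof.
  apply (coequalizer_epi (T_eps_coequalizer (projT1 (P (F (G c)))))).
  transitivity (comp rho (fmap T (fmap F (fmap G r)))).
  - unfold rho. rewrite <- (epsPF_etaP (P (F (G c)))). normalize_comp.
    rewrite <- (whisker_r (proj2_sig (epsPF (P (F (G c)))))), <- (whisker_r r_assoc).
    rewrite (whisker_r (proj2_sig (fmap P (fmap F (fmap G r))))).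
    rewrite <- (fmap_square T (etaP_nat _ _ (fmap F (fmap G r)))). reflexivity.
  - rewrite <- t_rho, <- !comp_assoc, (fmap_square T (eps_nat _ _ r)). reflexivity.
Qed.

Let Ac : Alg T := existT (fun Y => Hom (T Y) Y) c t.

Lemma epsPF_lift : epsU Ac = r.
Proof.
  assert (H : epsPF Ac = (exist _ r r_algebra_map : Hom (P (F (G c))) Ac)).
  { apply free_unique. etransitivity; [apply (epsPF_etaP Ac)|]. simpl.
    apply G_faithful. rewrite fmap_comp, G_r. unfold xc. normalize_comp.
    rewrite <- (fmap_square G (etaP_nat _ _ (fmap F phi))).
    rewrite G_eps_c. unfold a0. rewrite <- !comp_assoc. reflexivity. }
  rewrite H. reflexivity.
Qed.

Lemma phi_EM_map :
  comp phi (fmap G (epsU Ac)) = comp x (fmap G (UP (fmap F phi))).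
Proof.
  rewrite epsPF_lift. simpl. rewrite G_r. unfold xc.
  rewrite comp_assoc, phi_psi, comp_id_l. reflexivity.
Qed.

Lemma psi_EM_map :
  comp psi x = comp (fmap G (epsU Ac)) (fmap G (UP (fmap F psi))).
Proof.
  rewrite epsPF_lift. simpl. rewrite G_r. unfold xc.
  rewrite <- !comp_assoc, (fmap_retraction G (UP_retraction (fmap_retraction F phi_psi))),
    comp_id_r. reflexivity.
Qed.
End Lift.
End Isomorphic.

Lemma EM_algebra_lift : exists (c : C) (t : Hom (T c) c) (phi : Hom (G c) X) (psi : Hom X (G c)),
  comp phi psi = id X /\ comp psi phi = id (G c) /\
  comp phi (fmap G (epsU (existT (fun Y => Hom (T Y) Y) c t))) = comp x (fmap G (UP (fmap F phi))) /\
  comp psi x = comp (fmap G (epsU (existT (fun Y => Hom (T Y) Y) c t))) (fmap G (UP (fmap F psi))).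
Proof.
  destruct (G_ess_surj X a0 a0_unit a0_assoc) as (c & phi & psi & Hpp & Hpp' & Hphi).
  destruct (G_full _ _ _ (xc_GF_map c phi psi Hpp Hpp' Hphi)) as [r Hr].
  destruct (proj2 (T_eps_coequalizer c) c _ (rho_coequalizes c phi psi Hphi r Hr))
    as [t [Ht _]].
  exists c, t, phi, psi. repeat split; try assumption.
  - exact (phi_EM_map c phi psi Hpp Hpp' Hphi r Hr t Ht).
  - exact (psi_EM_map c phi psi Hpp Hpp' Hphi r Hr t Ht).
Qed.
End EMAlgebra.
End LiftingAlgebras.

Section CompositeComparison.
Context {C D : Category} {T : Functor C C} {G : Functor C D} {F : Functor D C}.
Context {adj : Adjunction F G} (e : Equivalence (Comparison adj)).
Context (pres : PreservesReflexiveCoequalizers T).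
Context {P : Functor C (Alg T)} (ap : Adjunction P (AlgForget T)).

Local Notation eps := (adj_counit adj).
Local Notation etaP := (adj_unit ap).
Local Notation adjPF := (adjunction_compose adj ap).
Local Notation epsPF A := (proj1_sig (adj_counit adjPF A)).

(* T ε_c is a coequalizer, since ε_c is a reflexive one. *)
Lemma T_counit_coequalizer (c : C) :
  @IsCoequalizer C _ _ _ (fmap T (eps (F (G c)))) (fmap T (fmap F (fmap G (eps c))))
    (fmap T (eps c)).
Proof.
  apply (pres _ _ _ _ _ (fmap F (adj_unit adj (G c)))).
  - apply (adj_tri1 adj).
  - apply (fmap_retraction F (adj_tri2 adj c)).
  - apply (counit_coequalizer e).
Qed.

Lemma composite_comparison_full (A B : Alg T)
  (m : Hom (Comparison adjPF A) (Comparison adjPF B)) :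
  exists f, fmap (Comparison adjPF) f = m.
Proof.
  destruct m as [m Hm_EM]. simpl in m.
  assert (Hm : comp m (fmap G (epsPF A)) =
               comp (fmap G (epsPF B)) (fmap G (proj1_sig (fmap P (fmap F m)))))
    by exact Hm_EM.
  assert (counitE : forall X : Alg T,
    comp (epsPF X) (etaP (F (G (projT1 X)))) = eps (projT1 X))
    by (intros X; apply (adjunction_compose_counit adj ap X)).
  (* m is a map of G F-algebras, hence the image of some f0 : a0 -> b0 *)
  assert (Hm_GF : comp m (fmap G (eps (projT1 A))) =
                  comp (fmap G (eps (projT1 B))) (fmap G (fmap F m))).
  { rewrite <- !counitE, !fmap_comp, comp_assoc, Hm. normalize_comp.
    pose proof (fmap_square G (adj_unit_nat ap _ _ (fmap F m))) as N. simpl in N.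
    rewrite N. reflexivity. }
  destruct (monadic_full e _ _ m Hm_GF) as [f0 Hf0]. subst m.
  (* f0 commutes with the counits of P F ⊣ G U, and since T ε_{a0} is epi
     this forces f0 to be a T-algebra map. *)
  assert (Hf0_counit : comp f0 (epsPF A) =
                       comp (epsPF B) (proj1_sig (fmap P (fmap F (fmap G f0))))).
  { apply (monadic_faithful e). rewrite !fmap_comp. exact Hm. }
  assert (Hf0_alg : comp f0 (projT2 A) = comp (projT2 B) (fmap T f0)).
  { refine (algebra_map_along_epi T (projT2 A) (projT2 B) _ _ _ _ _ f0
       (proj2_sig (adj_counit adjPF A)) (proj2_sig (adj_counit adjPF B))
       (proj2_sig (fmap P (fmap F (fmap G f0)))) Hf0_counit _).
    intros Z h1 h2 H. apply (coequalizer_epi (T_counit_coequalizer (projT1 A))).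
    rewrite <- (counitE A), !fmap_comp, !comp_assoc, H. reflexivity. }
  exists (exist _ f0 Hf0_alg). apply sig_eq_proj. reflexivity.
Qed.

Lemma composite_comparison_faithful (A B : Alg T) (f g : Hom A B) :
  fmap (Comparison adjPF) f = fmap (Comparison adjPF) g -> f = g.
Proof.
  intros H. apply sig_eq_proj, (monadic_faithful e). exact (f_equal (@proj1_sig _ _) H).
Qed.

Lemma composite_comparison_ess_surj (B : EM adjPF) :
  exists (A : Alg T) (i : Hom (Comparison adjPF A) B) (j : Hom B (Comparison adjPF A)),
    comp i j = id B /\ comp j i = id (Comparison adjPF A).
Proof.
  destruct B as [[X x] [x_unit x_assoc]].
  destruct (EM_algebra_lift (adj_unit adj) (adj_counit adj) (adj_unit ap)
              (adj_counit adjPF) (adj_counit_nat adj) (adj_unit_nat ap)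
              (adjunction_compose_counit adj ap)
              (fun A B h => f_equal (@proj1_sig _ _) (adj_counit_nat adjPF A B h))
              (adjunction_transpose_unique ap) (monadic_faithful e) (monadic_full e)
              (monadic_ess_surj e) T_counit_coequalizer X x x_unit x_assoc)
    as (c & t & phi & psi & phi_psi & psi_phi & phi_EM & psi_EM).
  exists (existT (fun Y => Hom (T Y) Y) c t),
    (exist _ phi phi_EM), (exist _ psi psi_EM).
  split; apply sig_eq_proj; assumption.
Qed.
End CompositeComparison.

Theorem theorem1p10 (C D : Category) (T : Functor C C) (G : Functor C D) :
  Varietor T ->
  PreservesReflexiveCoequalizers T ->
  Monadic G ->
  Monadic (FComp G (AlgForget T)).
Proof.
  intros [P [ap]] pres [F [adj [e]]].
  exists (FComp P F), (adjunction_compose adj ap).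
  apply fully_faithful_ess_surj_equivalence.
  - exact (composite_comparison_faithful e ap).
  - exact (composite_comparison_full e pres ap).
  - exact (composite_comparison_ess_surj e pres ap).
Qed.
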